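(* Let $\mu\in GF(q)\setminus\{0\}$ with $b:=\mu^2\neq1$, and let $(s,c)$ be either $\left(\frac{1+\mu}2,\left(\frac{1-\mu}2\right)^2\right)$ or $\left(\frac{1-\mu}2,\left(\frac{1+\mu}2\right)^2\right)$. Suppose that for some $P,Q\in\mathcal B_1$ with $P\neq Q$ the circles $\mathcal B^1_{(sP,c)}$ and $\mathcal B^1_{(sQ,c)}$ are tangential. Let $k$ be the multiplicative order of $Q\bar P$ in $GF(q^2)^\times$. Then $3\le k\le q+1$, and for every $R\in\mathcal B_1$ the circles $$\mathcal B^1_{(sR,c)},\ \mathcal B^1_{(sR(Q\bar P),c)},\ \mathcal B^1_{(sR(Q\bar P)^2,c)},\ \dots,\ \mathcal B^1_{(sR(Q\bar P)^{k-1},c)}$$ form a Steiner chain of length $k$ for $\mathcal B_1$ and $\mathcal B_b$. In particular, a Steiner chain of the same length $k$ can be constructed starting with any circle of $\{\mathcal B^1_{(sR,c)}:R\in\mathcal B_1\}$.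
   Context: Let $p$ be an odd prime, $m\ge1$, and $q=p^m$. $GF(q^2)$ denotes the quadratic extension of $GF(q)$, and for $z\in GF(q^2)$ we write $\bar z:=z^{q}$. The Miquelian Möbius plane $\mathbb M(q)$ has point set $GF(q^2)\cup\{\infty\}$; its circles of the first type are $\mathcal B^1_{(s,c)}=\{z\in GF(q^2):(z-s)(\bar z-\bar s)=c\}$ for $s\in GF(q^2)$, $c\in GF(q)\setminus\{0\}$ (circles of the second type are $\{z:\bar s z+s\bar z=c\}\cup\{\infty\}$ for $s\neq0$, $c\in GF(q)$). Two circles are called tangential if they have exactly one point in common. For $a\in GF(q)\setminus\{0\}$ put $\mathcal B_a:=\mathcal B^1_{(0,a)}$, and let $\tau(1,b)$ be the set of circles tangential to both $\mathcal B_1$ and $\mathcal B_b$. A Steiner chain of length $k\ge3$ for $\mathcal B_1$ and $\mathcal B_b$ is a sequence of $k$ pairwise distinct circles $T_1,\dots,T_k\in\tau(1,b)$ such that $T_i$ and $T_{i+1}$ are tangential for $i=1,\dots,k-1$ and $T_k$ and $T_1$ are tangential. *)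

(* GF(q^2) is modelled as an arbitrary finite field L with
   #|L| = q^2, q = p^m; GF(q) is its subfield {z | z^q = z}; conj z = z^q. *)
From HB Require Import structures.
From mathcomp Require Import all_boot all_order all_algebra all_field.
Set Implicit Arguments. Unset Strict Implicit. Unset Printing Implicit Defensive.
Import Order.TTheory GRing.Theory.
Local Open Scope ring_scope.

Section Mobius.
Variables (L : finFieldType) (q : nat).

Definition conjq (z : L) : L := z ^+ q.

Definition inGFq (z : L) : bool := z ^+ q == z.

(* points of M(q): Some z for z in GF(q^2), None for infinity *)
Definition point := option L.

Definition circ1 (s c : L) : {set point} :=
  [set x : point | if x is Some z then (z - s) * conjq (z - s) == c else false].

Definition circ2 (s c : L) : {set point} :=
  [set x : point | if x is Some z then conjq s * z + s * conjq z == c else true].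

Definition is_circle (C : {set point}) : Prop :=
  (exists s c, inGFq c /\ c != 0 /\ C = circ1 s c) \/
  (exists s c, s != 0 /\ inGFq c /\ C = circ2 s c).

Definition tangential (C D : {set point}) : Prop := #|C :&: D| = 1%N.

Definition Bc (a : L) : {set point} := circ1 0 a.

Definition in_tau (b : L) (C : {set point}) : Prop :=
  is_circle C /\ tangential C (Bc 1) /\ tangential C (Bc b).

Definition steiner_chain (b : L) (k : nat) (T : nat -> {set point}) : Prop :=
  (3 <= k)%N /\
  (forall i, (i < k)%N -> in_tau b (T i)) /\
  (forall i j, (i < k)%N -> (j < k)%N -> T i = T j -> i = j) /\
  (forall i, (i.+1 < k)%N -> tangential (T i) (T i.+1)) /\
  tangential (T k.-1) (T 0%N).

End Mobius.

From HB Require Import structures.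
From mathcomp Require Import all_boot all_order all_algebra all_field.
From mathcomp Require Import ring.
Import GRing.Theory.
Set Implicit Arguments. Unset Strict Implicit.
Local Open Scope ring_scope.

(* The map z |-> s z sends the unit circle B_1 onto the centres of circles of
   radius c touching both B_1 (at z) and B_b (at +-mu z), and multiplication by
   any w of norm 1 is an automorphism of the plane fixing B_1 and B_b.  Hence
   rotating by w = Q P^-1, which carries the circle at sP to the tangential
   one at sQ, produces a closed chain of mutually consecutive tangential
   circles, closing after ord(w) steps; ord(w) divides q + 1 since w^(q+1) is
   the norm of w.  The circles of a chain are distinct because each meets B_1
   in a single point R w^i, and k = 2 is impossible because the circles at
   sP and -sP are exchanged by z |-> -z, so they meet in 0 or >= 2 points. *)

Section MiquelianPlane.
Variables (L : finFieldType) (q : nat).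
Hypothesis q_pchar : ([pchar L]%R).-nat q.

Lemma conjq_is_zmod_morphism : zmod_morphism (@conjq L q).
Proof. by move=> x y; rewrite /conjq exprDn_pchar // exprNn_pchar. Qed.

Lemma conjq_is_monoid_morphism : monoid_morphism (@conjq L q).
Proof. by split=> [|x y]; rewrite /conjq ?expr1n ?exprMn. Qed.

HB.instance Definition _ :=
  GRing.isZmodMorphism.Build L L (@conjq L q) conjq_is_zmod_morphism.
HB.instance Definition _ :=
  GRing.isMonoidMorphism.Build L L (@conjq L q) conjq_is_monoid_morphism.

Definition normq (z : L) : L := z * conjq q z.

Lemma in_circ1 (s c z : L) : (Some z \in circ1 q s c) = (normq (z - s) == c).
Proof. by rewrite inE. Qed.

Lemma normqM (x y : L) : normq (x * y) = normq x * normq y.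
Proof. by rewrite /normq rmorphM; ring. Qed.

Lemma normqX (x : L) n : normq (x ^+ n) = normq x ^+ n.
Proof. by rewrite /normq rmorphXn exprMn. Qed.

Lemma normq1_mul_conjq (x y : L) :
  normq x = 1 -> normq y = 1 -> normq (y * conjq q x) = 1.
Proof.
move=> Nx Ny; rewrite normqM Ny mul1r /normq -(rmorphM (@conjq L q)) /=.
by rewrite -/(normq x) Nx rmorph1.
Qed.

Lemma normqN (x : L) : normq (- x) = normq x.
Proof. by rewrite /normq rmorphN mulrNN. Qed.

Lemma normq_conjq_id (t : L) : conjq q t = t -> normq t = t ^+ 2.
Proof. by rewrite /normq => ->. Qed.

Lemma normq1_neq0 (x : L) : normq x = 1 -> x != 0.
Proof. by move/eqP; apply: contraTneq => ->; rewrite /normq mul0r eq_sym oner_eq0. Qed.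

Lemma primitive_order_le_normq1 (w : L) k :
  normq w = 1 -> k.-primitive_root w -> (k <= q.+1)%N.
Proof. by move=> Nw wk; rewrite dvdn_leq // (prim_order_dvd wk) exprS -/(normq w) Nw. Qed.

Lemma inGFqN (x : L) : inGFq q x -> inGFq q (- x).
Proof. by rewrite /inGFq -!/(conjq q _) rmorphN /= => /eqP ->. Qed.

Lemma card_circ1I_rot (u a a' c : L) : normq u = 1 ->
  #|circ1 q (u * a) c :&: circ1 q (u * a') c| = #|circ1 q a c :&: circ1 q a' c|.
Proof.
move=> Nu; have u0 := normq1_neq0 Nu.
pose f := omap (fun z => u^-1 * z).
have f_inj : injective f by apply/inj_omap/mulfI; rewrite invr_eq0.
have circ1_rot d : circ1 q (u * d) c = f @^-1: circ1 q d c.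
  apply/setP => -[z|]; rewrite !inE //=.
  rewrite (_ : z - u * d = u * (u^-1 * z - d)); last by rewrite mulrBr mulVKf.
  by rewrite -/(normq (u * _)) normqM Nu mul1r.
by rewrite !circ1_rot -preimsetI card_preimset.
Qed.

Lemma circ1_opp (a c z : L) :
  (Some (- z) \in circ1 q a c) = (Some z \in circ1 q (- a) c).
Proof. by rewrite !in_circ1 -[z - - a]opprK normqN opprD opprK. Qed.

Hypothesis two_neq0 : (2%:R : L) != 0.

(* z |-> -z exchanges the two circles, so their common points come in pairs
   unless the only one is 0, which lies on neither. *)
Lemma circ1_opp_not_tangential (a c : L) :
  normq a != c -> ~ tangential (circ1 q a c) (circ1 q (- a) c).
Proof.
move=> Na /eqP/cards1P[[z|] zP]; last by have := set11 (@None L); rewrite -zP !inE.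
have opp_in : Some (- z) \in circ1 q a c :&: circ1 q (- a) c.
  have : Some z \in circ1 q a c :&: circ1 q (- a) c by rewrite zP set11.
  by rewrite !in_setI !circ1_opp opprK andbC.
have z0 : z = 0.
  move: opp_in; rewrite zP inE => /eqP[/eqP]; rewrite eq_sym -addr_eq0.
  by rewrite -mulr2n -mulr_natr mulf_eq0 (negbTE two_neq0) orbF => /eqP.
have : Some z \in circ1 q a c by move: (set11 (Some z)); rewrite -zP inE => /andP[].
by rewrite in_circ1 z0 sub0r normqN (negbTE Na).
Qed.

Lemma tangential_circ1_rot (u a a' c : L) : normq u = 1 ->
  tangential (circ1 q (u * a) c) (circ1 q (u * a') c) <->
  tangential (circ1 q a c) (circ1 q a' c).
Proof. by move=> Nu; rewrite /tangential card_circ1I_rot. Qed.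

(* Both norms are affine in z R^q + R z^q, which is thereby eliminated. *)
Lemma normq_sub_scale (z R r t : L) :
  conjq q r = r -> conjq q t = t -> normq z = r ^+ 2 -> normq R = 1 ->
  r * normq (z - t * R) = r * (r - t) ^+ 2 + t * normq (z - r * R).
Proof. by rewrite /normq !rmorphB !rmorphM /= => -> -> Nz NR; ring: Nz NR. Qed.

Lemma circ1I_Bc (s r R : L) :
  conjq q s = s -> conjq q r = r -> s != 0 -> normq R = 1 ->
  circ1 q (s * R) ((r - s) ^+ 2) :&: Bc q (r ^+ 2) = [set Some (r * R)].
Proof.
move=> Cs Cr s0 NR; apply/setP => -[z|]; last by rewrite !inE.
rewrite in_setI !in_circ1 subr0 in_set1.
apply/andP/eqP => [[/eqP zsR /eqP Nz]|[->]].
  have := normq_sub_scale Cr Cs Nz NR; rewrite zsR -{1}[_ * _ ^+ 2]addr0.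
  move=> /addrI/esym/eqP; rewrite mulf_eq0 (negbTE s0) /normq mulf_eq0.
  by rewrite fmorph_eq0 orbb subr_eq0 => /eqP ->.
have Crs : conjq q (r - s) = r - s by rewrite rmorphB /= Cr Cs.
by rewrite -mulrBl !normqM NR !mulr1 !normq_conjq_id.
Qed.

Section SteinerChain.
Variable nu : L.
Hypotheses (nu_inGFq : inGFq q nu) (nu_neq0 : nu != 0).
Hypotheses (nu_neq1 : nu != 1) (nu_neqN1 : nu != -1).

Let conjq_nu : conjq q nu = nu := eqP nu_inGFq.

Let s := (1 + nu) / 2%:R.
Let c := ((1 - nu) / 2%:R) ^+ 2.

Lemma conjq_s : conjq q s = s.
Proof. by rewrite fmorph_div rmorphD rmorph1 rmorph_nat /= conjq_nu. Qed.

Lemma s_neq0 : s != 0.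
Proof.
rewrite mulf_neq0 ?invr_eq0 // addr_eq0.
by apply: contra nu_neqN1 => /eqP ->; rewrite opprK.
Qed.

Lemma c_neq0 : c != 0.
Proof. by rewrite expf_neq0 // mulf_neq0 ?invr_eq0 // subr_eq0 eq_sym. Qed.

Lemma c_inGFq : inGFq q c.
Proof.
apply/eqP; rewrite -[_ ^+ q]/(conjq q c) rmorphXn fmorph_div rmorphB.
by rewrite rmorph1 rmorph_nat /= conjq_nu.
Qed.

Lemma c_eq_sqr_1 : (1 - s) ^+ 2 = c.
Proof. by rewrite /c /s; congr (_ ^+ 2); field. Qed.

Lemma c_eq_sqr_nu : (nu - s) ^+ 2 = c.
Proof. by rewrite /c /s -sqrrN; congr (_ ^+ 2); field. Qed.

Lemma normq_s_neq_c : normq s != c.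
Proof.
rewrite normq_conjq_id ?conjq_s // -subr_eq0.
by have -> : s ^+ 2 - c = nu by rewrite /s /c; field.
Qed.

Lemma circ1I_B1 (R : L) : normq R = 1 -> circ1 q (s * R) c :&: Bc q 1 = [set Some R].
Proof.
move=> NR; have := circ1I_Bc conjq_s (rmorph1 _) s_neq0 NR.
by rewrite expr1n mul1r c_eq_sqr_1.
Qed.

Lemma circ1I_Bb (R : L) : normq R = 1 ->
  circ1 q (s * R) c :&: Bc q (nu ^+ 2) = [set Some (nu * R)].
Proof. by move=> NR; rewrite -c_eq_sqr_nu (circ1I_Bc conjq_s conjq_nu s_neq0 NR). Qed.

Lemma circ1_in_tau (R : L) : normq R = 1 -> in_tau q (nu ^+ 2) (circ1 q (s * R) c).
Proof.
move=> NR; split; first by left; exists (s * R), c; rewrite c_inGFq c_neq0.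
by rewrite /tangential circ1I_B1 // circ1I_Bb // !cards1.
Qed.

Lemma circ1_s_inj (R R' : L) : normq R = 1 -> normq R' = 1 ->
  circ1 q (s * R) c = circ1 q (s * R') c -> R = R'.
Proof.
move=> NR NR' E; have := circ1I_B1 NR; rewrite E circ1I_B1 //.
by move=> /setP/(_ (Some R)); rewrite !inE eqxx => /eqP[].
Qed.

Lemma primitive_order_ge3 (w : L) k : w != 1 ->
  tangential (circ1 q s c) (circ1 q (s * w) c) -> k.-primitive_root w -> (3 <= k)%N.
Proof.
move=> w1 tang wk; case: k wk => [|[|[|k]]] // wk.
  by move: w1; rewrite -(prim_expr_order wk) expr1 eqxx.
have /eqP := prim_expr_order wk.
rewrite -subr_eq0 -[X in _ - X](expr1n _ 2) subr_sqr mulf_eq0 subr_eq0 (negbTE w1) /=.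
rewrite addr_eq0 => /eqP wN1; move: tang; rewrite wN1 mulrN1.
by move/(circ1_opp_not_tangential normq_s_neq_c).
Qed.

Lemma steiner_chain_rot (w R : L) k : normq w = 1 -> normq R = 1 ->
  (3 <= k)%N -> k.-primitive_root w ->
  tangential (circ1 q s c) (circ1 q (s * w) c) ->
  steiner_chain q (nu ^+ 2) k (fun i => circ1 q (s * R * w ^+ i) c).
Proof.
move=> Nw NR k3 wk tang.
have NRw i : normq (R * w ^+ i) = 1 by rewrite normqM normqX Nw NR expr1n mulr1.
have tangS i : tangential (circ1 q (s * R * w ^+ i) c) (circ1 q (s * R * w ^+ i.+1) c).
  have -> : s * R * w ^+ i = R * w ^+ i * s by ring.
  have -> : s * R * w ^+ i.+1 = R * w ^+ i * (s * w) by rewrite exprSr; ring.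
  exact/(tangential_circ1_rot _ _ _ (NRw i)).
split=> //; split; first by move=> i _; rewrite -mulrA; exact: circ1_in_tau.
split.
  move=> i j ik jk; rewrite -!(mulrA s) => /(circ1_s_inj (NRw i) (NRw j)).
  move=> /(mulfI (normq1_neq0 NR)) /eqP.
  by rewrite (eq_prim_root_expr wk) !modn_small // => /eqP.
split; first by move=> i _; exact: tangS.
by have := tangS k.-1; rewrite prednK ?(prim_order_gt0 wk) // (prim_expr_order wk).
Qed.

End SteinerChain.

End MiquelianPlane.

Theorem mainTheorem8 (p m : nat) (L : finFieldType)
  (hp : prime p) (hodd : odd p) (hm : (0 < m)%N)
  (hcard : #|L| = ((p ^ m) ^ 2)%N)
  (mu : L) (hmuF : inGFq (p ^ m) mu) (hmu0 : mu != 0)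
  (b : L) (hb : b = mu ^+ 2) (hb1 : b != 1)
  (s c : L)
  (hsc : (s = (1 + mu) / 2%:R /\ c = ((1 - mu) / 2%:R) ^+ 2) \/
         (s = (1 - mu) / 2%:R /\ c = ((1 + mu) / 2%:R) ^+ 2))
  (P Q : L)
  (hP : Some P \in Bc (p ^ m) 1) (hQ : Some Q \in Bc (p ^ m) 1) (hPQ : P != Q)
  (htang : tangential (circ1 (p ^ m) (s * P) c) (circ1 (p ^ m) (s * Q) c))
  (k : nat) (hk : k.-primitive_root (Q * conjq (p ^ m) P)) :
  (3 <= k <= (p ^ m).+1)%N /\
  forall R : L, Some R \in Bc (p ^ m) 1 ->
    steiner_chain (p ^ m) b k
      (fun i => circ1 (p ^ m) (s * R * (Q * conjq (p ^ m) P) ^+ i) c).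
Proof.
have pchar_p : p \in [pchar L]%R by apply: (card_finPcharP _ hp); rewrite hcard -expnM.
have q_pchar : ([pchar L]%R).-nat (p ^ m)%N by rewrite pnatX (pnatE _ hp) pchar_p.
have two_neq0 : (2%:R : L) != 0.
  by rewrite -(dvdn_pcharf pchar_p) (dvdn_prime2 hp) //; apply: contraL hodd => /eqP ->.
have normq_B1 (X : L) : Some X \in Bc (p ^ m) 1 -> normq (p ^ m) X = 1.
  by rewrite in_circ1 subr0 => /eqP.
set w := Q * conjq (p ^ m) P in hk *.
have [NP NQ] := (normq_B1 P hP, normq_B1 Q hQ).
have Nw : normq (p ^ m) w = 1 := normq1_mul_conjq q_pchar NP NQ.
have Qw : Q = w * P by rewrite -mulrA [_ * P]mulrC -/(normq _ P) NP mulr1.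
have w1 : w != 1 by apply: contra_neq hPQ => w1; rewrite Qw w1 mul1r.
have tang1 : tangential (circ1 (p ^ m) s c) (circ1 (p ^ m) (s * w) c).
  by apply/(tangential_circ1_rot q_pchar _ _ _ NP); rewrite mulrC mulrCA [P * w]mulrC -Qw.
(* The second choice of (s, c) is the first one for -mu. *)
have [nu [Cnu nu0 nu1 nuN1 [hs hc ->]]] : exists nu : L,
    [/\ inGFq (p ^ m) nu, nu != 0, nu != 1, nu != -1 &
     [/\ s = (1 + nu) / 2%:R, c = ((1 - nu) / 2%:R) ^+ 2 & b = nu ^+ 2]].
  have mu1 : mu != 1 by apply: contra_neq hb1 => mu1; rewrite hb mu1 expr1n.
  have muN1 : mu != -1 by apply: contra_neq hb1 => muN1; rewrite hb muN1 sqrrN expr1n.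
  case: hsc => [[-> ->]|[-> ->]]; first by exists mu.
  exists (- mu); rewrite !opprK sqrrN oppr_eq0 inGFqN //.
  by split=> //; rewrite eqr_oppLR ?opprK.
subst s c; have k3 := primitive_order_ge3 q_pchar two_neq0 Cnu nu0 w1 tang1 hk.
split; first by rewrite k3 (primitive_order_le_normq1 Nw hk).
by move=> R /normq_B1 NR; apply: steiner_chain_rot.
Qed.
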